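(* Let $A\in\mathsf{FOR}^\ast$. There exists $\varphi\in\mathsf{FOR}$ such that $\models_{\mathsf{CPL}}A\leftrightarrow St(\varphi)$ if and only if $A$ is $\mathsf{S}$-set invariant.
   Context: Language: propositional letters $\Phi=\{p_0,p_1,p_2,\dots\}$; unary connective $\neg$; binary connectives $\lor,\wedge,\to,\leftrightarrow,\vartriangle,\looparrowright$; $\mathsf{FOR}$ is the set of all formulas built freely from $\Phi$. An Epstein model is a pair $\mathfrak{M}=\langle v,\mathfrak{R}\rangle$ with $v:\Phi\to\{0,1\}$ and $\mathfrak{R}\subseteq\mathsf{FOR}\times\mathsf{FOR}$. Truth $\mathfrak{M}\vDash\varphi$: $\mathfrak{M}\vDash p$ iff $v(p)=1$; boolean connectives classical; $\mathfrak{M}\vDash\varphi\vartriangle\psi$ iff $\mathfrak{M}\vDash\varphi$, $\mathfrak{M}\vDash\psi$ and $\langle\varphi,\psi\rangle\in\mathfrak{R}$; $\mathfrak{M}\vDash\varphi\looparrowright\psi$ iff ($\mathfrak{M}\nvDash\varphi$ or $\mathfrak{M}\vDash\psi$) and $\langle\varphi,\psi\rangle\in\mathfrak{R}$. $\Omega^{\mathfrak{M}}=\{\langle\varphi,\psi\rangle:\mathfrak{M}\nvDash\varphi\to\psi\}$ and $\mathsf{S}^{\mathfrak{M}}=\{\langle v',\mathfrak{R}'\rangle: v'=v,\ \mathfrak{R}\setminus\Omega^{\mathfrak{M}}\subseteq\mathfrak{R}'\subseteq\mathfrak{R}\cup\Omega^{\mathfrak{M}}\}$. Classical language: $\mathsf{At}=\Phi\cup\{p_{\langle\varphi,\psi\rangle}:\varphi,\psi\in\mathsf{FOR}\}$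 (new distinct atoms indexed by pairs of formulas); $\mathsf{FOR}^\ast$ is the set of classical propositional formulas over $\mathsf{At}$ with connectives $\neg,\wedge,\lor,\to,\leftrightarrow$. An Epstein model $\mathfrak{M}=\langle v,\mathfrak{R}\rangle$ is read as a classical valuation of $\mathsf{At}$: $\mathfrak{M}\models_{\mathsf{CPL}}p_n$ iff $v(p_n)=1$, and $\mathfrak{M}\models_{\mathsf{CPL}}p_{\langle\varphi,\psi\rangle}$ iff $\langle\varphi,\psi\rangle\in\mathfrak{R}$, extended classically. $\models_{\mathsf{CPL}}A$ means $\mathfrak{M}\models_{\mathsf{CPL}}A$ for all Epstein models $\mathfrak{M}$. Standard translation $St:\mathsf{FOR}\to\mathsf{FOR}^\ast$: $St(p_n)=p_n$; $St(\neg\varphi)=\neg St(\varphi)$; $St(\varphi\ast\psi)=St(\varphi)\ast St(\psi)$ for $\ast\in\{\lor,\wedge,\to,\leftrightarrow\}$; $St(\varphi\looparrowright\psi)=St(\varphi\to\psi)\wedge p_{\langle\varphi,\psi\rangle}$; $St(\varphi\vartriangle\psi)=St(\varphi\wedge\psi)\wedge p_{\langle\varphi,\psi\rangle}$. A formula $A\in\mathsf{FOR}^\ast$ is $\mathsf{S}$-set invariant iff for all Epstein models $\mathfrak{M},\mathfrak{N}$: if $\mathfrak{M}\models_{\mathsf{CPL}}A$ and $\mathfrak{N}\in\mathsf{S}^{\mathfrak{M}}$ then $\mathfrak{N}\models_{\mathsf{CPL}}A$. *)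

From Stdlib Require Import Bool.

(* Epstein language FOR: letters p_n, negation, and binary connectives
   or, and, ->, <->, vartriangle (Tri), looparrowright (Loop). *)
Inductive FOR : Type :=
| Var  : nat -> FOR
| Neg  : FOR -> FOR
| Or   : FOR -> FOR -> FOR
| And  : FOR -> FOR -> FOR
| Imp  : FOR -> FOR -> FOR
| Iff  : FOR -> FOR -> FOR
| Tri  : FOR -> FOR -> FOR
| Loop : FOR -> FOR -> FOR.

Record EModel : Type := mkEModel {
  val : nat -> bool;
  rel : FOR -> FOR -> Prop
}.

Fixpoint etrue (M : EModel) (f : FOR) : Prop :=
  match f with
  | Var n => val M n = true
  | Neg a => ~ etrue M a
  | Or a b => etrue M a \/ etrue M b
  | And a b => etrue M a /\ etrue M b
  | Imp a b => etrue M a -> etrue M b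
  | Iff a b => (etrue M a <-> etrue M b)
  | Tri a b => etrue M a /\ etrue M b /\ rel M a b
  | Loop a b => (~ etrue M a \/ etrue M b) /\ rel M a b
  end.

Definition Omega (M : EModel) (a b : FOR) : Prop := ~ etrue M (Imp a b).

Definition inS (M N : EModel) : Prop :=
  val N = val M /\
  (forall a b, rel M a b /\ ~ Omega M a b -> rel N a b) /\
  (forall a b, rel N a b -> rel M a b \/ Omega M a b).

(* Classical language: atoms At = Phi + {p_<phi,psi>}. *)
Inductive At : Type :=
| AVar  : nat -> At
| APair : FOR -> FOR -> At.

Inductive FORs : Type :=
| SAtom : At -> FORs
| SNeg  : FORs -> FORs
| SAnd  : FORs -> FORs -> FORs
| SOr   : FORs -> FORs -> FORs
| SImp  : FORs -> FORs -> FORs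
| SIff  : FORs -> FORs -> FORs.

Definition atrue (M : EModel) (p : At) : Prop :=
  match p with
  | AVar n => val M n = true
  | APair a b => rel M a b
  end.

Fixpoint cpl (M : EModel) (A : FORs) : Prop :=
  match A with
  | SAtom p => atrue M p
  | SNeg a => ~ cpl M a
  | SAnd a b => cpl M a /\ cpl M b
  | SOr a b => cpl M a \/ cpl M b
  | SImp a b => cpl M a -> cpl M b
  | SIff a b => (cpl M a <-> cpl M b)
  end.

Definition cpl_valid (A : FORs) : Prop := forall M : EModel, cpl M A.

Fixpoint St (f : FOR) : FORs :=
  match f with
  | Var n => SAtom (AVar n)
  | Neg a => SNeg (St a)
  | Or a b => SOr (St a) (St b)
  | And a b => SAnd (St a) (St b)
  | Imp a b => SImp (St a) (St b)
  | Iff a b => SIff (St a) (St b)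
  | Loop a b => SAnd (SImp (St a) (St b)) (SAtom (APair a b))
  | Tri a b => SAnd (SAnd (St a) (St b)) (SAtom (APair a b))
  end.

Definition S_invariant (A : FORs) : Prop :=
  forall M N : EModel, cpl M A -> inS M N -> cpl N A.

(* The translation St is truth-preserving, and Epstein truth only depends on the
   pairs of R outside Omega^M; hence every St(phi) is S-set invariant.
   Conversely, read each atom p_<a,b> of A as the Epstein formula a ~> b.  The
   resulting formula is true in M exactly when A holds classically in the model
   obtained from M by deleting Omega^M from its relation; that model lies in
   S^M, so for S-set invariant A this is equivalent to A holding in M. *)

From Stdlib Require Import Classical.

Lemma etrue_St (M : EModel) (f : FOR) : cpl M (St f) <-> etrue M f.
Proof.
  induction f; simpl; try tauto.
  all: destruct (classic (etrue M f1)); tauto.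
Qed.

Lemma inS_etrue (M N : EModel) (f : FOR) : inS M N -> (etrue N f <-> etrue M f).
Proof.
  intros [Hval [Hkeep Hadd]].
  unfold Omega in *; induction f; simpl in *; try tauto.
  - rewrite Hval; tauto.
  - split; intros (Ha & Hb & Hr); repeat split; try tauto.
    + destruct (Hadd _ _ Hr); tauto.
    + apply Hkeep; tauto.
  - split; intros (Hab & Hr); split; try tauto.
    + destruct (Hadd _ _ Hr); tauto.
    + apply Hkeep; tauto.
Qed.

Lemma Omega_inS (M N : EModel) (a b : FOR) : inS M N -> (Omega N a b <-> Omega M a b).
Proof.
  intro HS; unfold Omega; rewrite (inS_etrue M N (Imp a b) HS); tauto.
Qed.

Lemma inS_sym (M N : EModel) : inS M N -> inS N M.
Proof.
  intros HS; pose proof HS as [Hval [Hkeep Hadd]].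
  split; [now symmetry|split]; intros a b; rewrite !(Omega_inS M N a b HS).
  - intros [Hr HO]; destruct (Hadd a b Hr); tauto.
  - intros Hr; destruct (classic (Omega M a b)); auto.
Qed.

Lemma St_S_invariant (f : FOR) : S_invariant (St f).
Proof.
  intros M N HM HS.
  apply etrue_St, (inS_etrue M N f HS), etrue_St, HM.
Qed.

Definition prune (M : EModel) : EModel :=
  mkEModel (val M) (fun a b => rel M a b /\ ~ Omega M a b).

Lemma inS_prune (M : EModel) : inS M (prune M).
Proof.
  unfold inS, prune; simpl; repeat split; tauto.
Qed.

Fixpoint FOR_of (A : FORs) : FOR :=
  match A with
  | SAtom (AVar n) => Var n
  | SAtom (APair a b) => Loop a b
  | SNeg a => Neg (FOR_of a)
  | SAnd a b => And (FOR_of a) (FOR_of b)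
  | SOr a b => Or (FOR_of a) (FOR_of b)
  | SImp a b => Imp (FOR_of a) (FOR_of b)
  | SIff a b => Iff (FOR_of a) (FOR_of b)
  end.

Lemma etrue_FOR_of (M : EModel) (A : FORs) : etrue M (FOR_of A) <-> cpl (prune M) A.
Proof.
  induction A as [[n|a b]| | | | |]; simpl; unfold Omega; simpl; try tauto.
Qed.

Theorem mainTheorem2 (A : FORs) :
  (exists phi : FOR, cpl_valid (SIff A (St phi))) <-> S_invariant A.
Proof.
  split.
  - intros [phi Hequiv] M N HM HS.
    apply (Hequiv N), (St_S_invariant phi M N), HS.
    now apply (Hequiv M).
  - intros Hinv. exists (FOR_of A). intro M. simpl.
    rewrite etrue_St, etrue_FOR_of.
    pose proof (inS_prune M) as HS.
    split; intro HA; [exact (Hinv _ _ HA HS) | exact (Hinv _ _ HA (inS_sym _ _ HS))].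
Qed.
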